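(* Let $\mathcal{L}\in\mathscr{C}^\infty(\oplus^k\mathrm{T}Q\times\mathbb{R}^k)$ be a regular Lagrangian, fix an index $i$, and suppose that on a natural coordinate domain $\partial\mathcal{L}/\partial q^i=0$. Then $Y=\partial/\partial q^i$ satisfies $\mathscr{L}_Y\eta^\alpha_{\mathcal{L}}=0$ for all $\alpha$ and $\mathscr{L}_YE_{\mathcal{L}}=0$, and for every $k$-vector field $\mathbf{X}=(X_\alpha)$ solving the $k$-contact Lagrangian equations, $$\sum_\alpha\mathscr{L}_{X_\alpha}\Big(\frac{\partial\mathcal{L}}{\partial v^i_\alpha}\Big)=-\sum_\alpha(\mathscr{L}_{(\mathcal{R}_{\mathcal{L}})_\alpha}E_{\mathcal{L}})\frac{\partial\mathcal{L}}{\partial v^i_\alpha}=\sum_\alpha\frac{\partial\mathcal{L}}{\partial s^\alpha}\frac{\partial\mathcal{L}}{\partial v^i_\alpha}.$$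
   Context: Natural coordinates on $\oplus^k\mathrm{T}Q\times\mathbb{R}^k$ are $(q^i,v^i_\alpha,s^\alpha)$. $\mathcal{L}$ is regular if the matrix $\big(\partial^2\mathcal{L}/\partial v^i_\alpha\partial v^j_\beta\big)$ is everywhere invertible. The Lagrangian energy is $E_{\mathcal{L}}=v^i_\alpha\,\partial\mathcal{L}/\partial v^i_\alpha-\mathcal{L}$ and the contact forms are $\eta^\alpha_{\mathcal{L}}=\mathrm{d}s^\alpha-\frac{\partial\mathcal{L}}{\partial v^i_\alpha}\mathrm{d}q^i$; for regular $\mathcal{L}$ these define a $k$-contact structure, whose Reeb vector fields $(\mathcal{R}_{\mathcal{L}})_\alpha$ are the unique vector fields with $i((\mathcal{R}_{\mathcal{L}})_\alpha)\eta^\beta_{\mathcal{L}}=\delta^\beta_\alpha$, $i((\mathcal{R}_{\mathcal{L}})_\alpha)\mathrm{d}\eta^\beta_{\mathcal{L}}=0$. The $k$-contact Lagrangian equations for $\mathbf{X}=(X_1,\dots,X_k)$ are $\sum_\alpha i(X_\alpha)\mathrm{d}\eta^\alpha_{\mathcal{L}}=\mathrm{d}E_{\mathcal{L}}-\sum_\alpha(\mathscr{L}_{(\mathcal{R}_{\mathcal{L}})_\alpha}E_{\mathcal{L}})\eta^\alpha_{\mathcal{L}}$ and $\sum_\alpha i(X_\alpha)\eta^\alpha_{\mathcal{L}}=-E_{\mathcal{L}}$. *)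

(* local (coordinate) formalization on an open
   natural coordinate domain U of (+)^k TQ x R^k, identified with an open
   subset of R^(n + n k + k). *)
From HB Require Import structures.
From mathcomp Require Import all_boot all_order all_algebra.
From mathcomp Require Import all_classical all_reals all_analysis.
Set Implicit Arguments. Unset Strict Implicit. Unset Printing Implicit Defensive.
Import Order.TTheory GRing.Theory Num.Theory.
Import numFieldNormedType.Exports.
Local Open Scope classical_set_scope.
Local Open Scope ring_scope.

(* coordinate labels: q^i, v^i_alpha, s^alpha *)
Definition coordT (n k : nat) : finType := (('I_n + ('I_n * 'I_k)) + 'I_k)%type.
Definition qc {n k : nat} (i : 'I_n) : coordT n k := inl (inl i).
Definition vc {n k : nat} (i : 'I_n) (a : 'I_k) : coordT n k := inl (inr (i, a)).
Definition sc {n k : nat} (a : 'I_k) : coordT n k := inr a.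

Section Coords.
Variables (R : realType) (n k : nat).
Notation C := (coordT n k).
Definition pt := 'rV[R]_(#|{: C}|).

Definition coord (x : pt) (c : C) : R := x ord0 (enum_rank c).
Definition ebasis (c : C) : pt := delta_mx ord0 (enum_rank c).
Definition pd (c : C) (f : pt -> R) (x : pt) : R := derive f x (ebasis c).
Definition Dn (l : seq C) (f : pt -> R) : pt -> R := foldr pd f l.
Definition smooth_on (U : set pt) (f : pt -> R) : Prop :=
  forall (l : seq C) (x : pt), U x -> differentiable (Dn l f) x.

(* vector fields and 1-forms by their coordinate components *)
Definition vfield := pt -> C -> R.
Definition form1 := pt -> C -> R.

Definition vf_app (X : vfield) (f : pt -> R) (x : pt) : R :=
  \sum_(c : C) X x c * pd c f x.
Definition contr (X : vfield) (w : form1) (x : pt) : R :=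
  \sum_(c : C) X x c * w x c.
(* component d of i(X) d omega *)
Definition contr_d (X : vfield) (w : form1) (x : pt) (d : C) : R :=
  \sum_(c : C) X x c * (pd c (fun y => w y d) x - pd d (fun y => w y c) x).
Definition lie_form (Y : vfield) (w : form1) (x : pt) (d : C) : R :=
  \sum_(c : C) (Y x c * pd c (fun y => w y d) x + w x c * pd d (fun y => Y y c) x).

(* contact forms eta^alpha_L = ds^alpha - dL/dv^i_alpha dq^i *)
Definition etaL (L : pt -> R) (a : 'I_k) : form1 := fun x c =>
  match c with
  | inr b => if b == a then 1 else 0
  | inl (inl i) => - pd (vc i a) L x
  | inl (inr _) => 0
  end.

Definition energy (L : pt -> R) (x : pt) : R :=
  \sum_(i < n) \sum_(a < k) coord x (vc i a) * pd (vc i a) L x - L x.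

Definition vhess (L : pt -> R) (x : pt) : 'M[R]_(#|{: 'I_n * 'I_k}|) :=
  \matrix_(p, q) pd (vc (enum_val p).1 (enum_val p).2)
                    (pd (vc (enum_val q).1 (enum_val q).2) L) x.
Definition regular_on (U : set pt) (L : pt -> R) : Prop :=
  forall x, U x -> vhess L x \in unitmx.

Definition is_reeb (U : set pt) (L : pt -> R) (Rb : 'I_k -> vfield) : Prop :=
  forall (a : 'I_k) (x : pt), U x ->
    (forall b : 'I_k, contr (Rb a) (etaL L b) x = (a == b)%:R) /\
    (forall (b : 'I_k) (d : C), contr_d (Rb a) (etaL L b) x d = 0).

Definition klag_eqs (U : set pt) (L : pt -> R) (Rb : 'I_k -> vfield)
  (X : 'I_k -> vfield) : Prop :=
  forall x, U x ->
    (forall d : C, \sum_(a < k) contr_d (X a) (etaL L a) x d =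
        pd d (energy L) x - \sum_(a < k) vf_app (Rb a) (energy L) x * etaL L a x d) /\
    \sum_(a < k) contr (X a) (etaL L a) x = - energy L x.

Definition dq (i : 'I_n) : vfield := fun _ c => if c == qc i then 1 else 0.
End Coords.

From Pilot Require Import Defs.
From HB Require Import structures.
From mathcomp Require Import all_boot all_order all_algebra.
From mathcomp Require Import all_classical all_reals all_analysis.
From mathcomp Require Import ring lra.
Import Order.TTheory GRing.Theory Num.Theory.
Import numFieldNormedType.Exports.
Local Open Scope classical_set_scope.
Local Open Scope ring_scope.

(* If dL/dq^i vanishes on U, the mean value theorem makes L, and then each of
   its partial derivatives, locally invariant under translation in the q^i
   direction. The contact forms and the energy are built from these and from
   coordinates other than q^i, so their q^i-derivatives vanish; this gives the
   first two claims.
   Pairing i(R_a) d(eta^a) with d/dv^j_b shows that the velocity Hessian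
   annihilates the q-components of the Reeb field R_a. By regularity these
   vanish, so R_a has s-components delta_ab and kills every dL/dv; hence
   R_a(E_L) = - dL/ds^a. The q^i-component of the first k-contact Lagrangian
   equation reads - sum_a X_a(dL/dv^i_a) = sum_a R_a(E_L) dL/dv^i_a. *)

Section LocalInvariance.
Context {R : realType} {V : normedModType R}.
Implicit Types (f g : V -> R) (x y v : V) (eps : R).

Lemma derive_near_eq f g x y v :
  (\forall h \near (0 : R), f (h *: v + x) - f x = g (h *: v + y) - g y) ->
  derive f x v = derive g y v.
Proof.
move=> fg.
have fg' : \forall h \near (0 : R)^', f (h *: v + x) - f x = g (h *: v + y) - g y.
  by rewrite near_withinE; apply: filterS fg => h hh _.
rewrite /derive; congr lim; rewrite eqEsubset; split;
  by apply: near_eq_cvg; apply: filterS fg' => h /= ->.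
Qed.

Lemma derive_near_cst f x v :
  (\forall h \near (0 : R), f (h *: v + x) = f x) -> derive f x v = 0.
Proof.
move=> fx; rewrite -(derive_cst (0 : R) x v); apply: derive_near_eq.
by apply: filterS fx => h ->; rewrite !subrr.
Qed.

Lemma derive_near_quotient f x v l :
  (\forall h \near (0 : R)^', h^-1 *: ((f \o shift x) (h *: v) - f x) = l) ->
  derivable f x v /\ derive f x v = l.
Proof.
move=> fl; split; first exact: (is_cvg_near_cst l).
exact: lim_near_cst.
Qed.

Definition invariant_near f v x eps :=
  forall y t, `|x - y| < eps -> `|t| < eps -> f (y + t *: v) = f y.

Lemma invariant_near_le f v x eps1 eps2 :
  eps2 <= eps1 -> invariant_near f v x eps1 -> invariant_near f v x eps2.
Proof.
move=> le21 fv y t xy t_small.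
by apply: fv; apply: lt_le_trans le21.
Qed.

Lemma derive_invariant_near {f v x eps} :
  0 < eps -> invariant_near f v x eps -> derive f x v = 0.
Proof.
move=> eps_gt0 fv; apply: derive_near_cst; near=> h.
by rewrite addrC fv ?subrr ?normr0.
Unshelve. all: by end_near. Qed.

Lemma invariant_near_derive {f v x eps} d : 0 < eps ->
  invariant_near f v x eps -> invariant_near (fun z => derive f z d) v x (eps / 2).
Proof.
move=> eps_gt0 fv y t xy t_small /=.
have d_gt0 : 0 < `|d| + 1 by rewrite ltr_wpDl.
have eps_half : eps / 2 < eps by rewrite ltr_pdivrMr // ltr_pMr // ltr1n.
apply: derive_near_eq; near=> h.
have h_small : `|h| < eps / (2 * (`|d| + 1)).
  by near: h; apply: (@nbhs0_lt R R); rewrite divr_gt0 // mulr_gt0.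
have hd_small : `|h| * `|d| <= eps / (2 * (`|d| + 1)) * `|d|.
  by rewrite ler_wpM2r // ltW.
have hd_eq : eps / (2 * (`|d| + 1)) * (`|d| + 1) = eps / 2.
  by field; rewrite gt_eqF.
have xyh : `|x - (h *: d + y)| < eps.
  rewrite opprD addrCA (le_lt_trans (ler_normD _ _)) // normrN normrZ.
  have : 0 <= `|h| by []; have : 0 <= `|d| by []; lra.
by rewrite addrA !fv //; apply: lt_trans eps_half.
Unshelve. all: by end_near. Qed.

Lemma ball_invariant_of_derive0 {f v x} {r : R} :
  (forall z, `|x - z| < r -> differentiable f z /\ derive f z v = 0) ->
  forall y (t : R), `|x - y| + `|t| * `|v| < r -> f (y + t *: v) = f y.
Proof.
move=> df0 y t yt_small.
pose G := fun s : R => f (y + s *: v).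
have dG0 s : `|s| <= `|t| -> derivable G s 1 /\ derive G s 1 = 0.
  move=> st; have ys_small : `|x - (y + s *: v)| < r.
    apply: le_lt_trans yt_small.
    rewrite opprD addrA (le_trans (ler_normD _ _)) // normrN normrZ lerD2l.
    by rewrite ler_wpM2r.
  have [df d0] := df0 _ ys_small.
  have quotE : (fun h : R => h^-1 *: (((fun s' => f (y + s' *: v)) \o shift s) (h *: 1)
      - f (y + s *: v))) =
      (fun h : R => h^-1 *: ((f \o shift (y + s *: v)) (h *: v) - f (y + s *: v))).
    by apply: funext => h /=; rewrite /shift /= scaler1 scalerDl addrCA addrA [y + _]addrC.
  rewrite /derivable /derive /G quotE; split => //; exact: diff_derivable.
have G_cst a b : a <= b -> `|a| <= `|t| -> `|b| <= `|t| -> G b = G a.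
  move=> ab at_ bt.
  have in_t s : a <= s -> s <= b -> `|s| <= `|t|.
    move=> as_ sb; move: at_ bt; rewrite !ler_norml => /andP[a1 _] /andP[_ b2].
    by rewrite (le_trans a1 as_) (le_trans sb b2).
  have dG s : s \in `]a, b[%R -> is_derive s 1 G ((fun _ => 0) s).
    rewrite in_itv /= => /andP[as_ sb].
    by have [? ?] := dG0 s (in_t s (ltW as_) (ltW sb)); split.
  have cG : {within `[a, b], continuous G}.
    apply: continuous_in_subspaceT => s; rewrite inE /= in_itv /= => /andP[as_ sb].
    have [? _] := dG0 s (in_t s as_ sb).
    by apply: differentiable_continuous; apply/derivable1_diffP.
  have [c _ E] := MVT_segment ab dG cG.
  by apply/eqP; rewrite -subr_eq0 E mul0r.
have : G t = G 0.
  have t0 : `|0 : R| <= `|t| by rewrite normr0.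
  by case: (leP 0 t) => t_sgn; [exact: G_cst | apply/esym/G_cst => //; exact: ltW].
by rewrite /G scale0r addr0.
Qed.

Lemma invariant_near_of_derive0 {f v x} {r : R} : 0 < r ->
  (forall z, `|x - z| < r -> differentiable f z /\ derive f z v = 0) ->
  exists2 eps, 0 < eps & invariant_near f v x eps.
Proof.
move=> r_gt0 df0; have v_gt0 : 0 < `|v| + 1 by rewrite ltr_wpDl.
exists (r / (2 * (`|v| + 1))); first by rewrite divr_gt0 // mulr_gt0.
move=> y t xy t_small; apply: (ball_invariant_of_derive0 df0).
set e := r / (2 * (`|v| + 1)) in xy t_small *.
have ev : e * (`|v| + 1) = r / 2 by rewrite /e; field; rewrite gt_eqF.
have : `|t| * `|v| <= e * `|v| by rewrite ler_wpM2r // ltW.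
lra.
Qed.

Lemma derive_sum_mulB n k (F G : 'I_n -> 'I_k -> V -> R) f x v :
  (forall j b, derivable (F j b) x v) -> (forall j b, derivable (G j b) x v) ->
  derivable f x v ->
  derive (fun y => \sum_(j < n) \sum_(b < k) F j b y * G j b y - f y) x v =
  \sum_(j < n) \sum_(b < k) (derive (F j b) x v * G j b x + F j b x * derive (G j b) x v)
    - derive f x v.
Proof.
move=> dF dG df.
have dFG j b : derivable (F j b * G j b) x v by apply: derivableM.
have -> : (fun y => \sum_(j < n) \sum_(b < k) F j b y * G j b y - f y) =
    \sum_(j < n) \sum_(b < k) (F j b * G j b) - f.
  by apply/funext => y; rewrite /= fct_sumE; congr (_ - _); apply: eq_bigr => j _;
    rewrite fct_sumE.
rewrite deriveB //; last by apply: derivable_sum => j; exact: derivable_sum.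
rewrite derive_sum; last by move=> j; exact: derivable_sum.
congr (_ - _); apply: eq_bigr => j _; rewrite derive_sum //; apply: eq_bigr => b _.
by rewrite deriveM // /GRing.scale /= addrC mulrC.
Qed.

Lemma open_norm_ball {U : set V} {x : V} :
  open U -> U x -> exists2 r, 0 < r & forall z, `|x - z| < r -> U z.
Proof.
rewrite openE => /(_ x) /[apply] /nbhs_ballP [r r_gt0 rU].
by exists r => // z xz; apply: rU; rewrite -ball_normE.
Qed.

End LocalInvariance.

Section Coordinates.
Context {R : realType} {n k : nat}.
Local Notation C := (coordT n k).
Local Notation P := (pt R n k).

Lemma sum_coordT (F : C -> R) :
  \sum_(c : C) F c = \sum_(j < n) F (qc j) + \sum_(j < n) \sum_(b < k) F (vc j b)
     + \sum_(b < k) F (sc b).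
Proof.
rewrite big_sumType /= big_sumType /=; congr (_ + _ + _).
by rewrite pair_bigA; apply: eq_bigr => -[j b] _.
Qed.

Lemma coord_add_ebasis (y : P) t d c :
  Defs.coord (y + t *: ebasis R d) c = Defs.coord y c + t * (d == c)%:R.
Proof.
by rewrite /Defs.coord /ebasis !mxE eqxx /= (inj_eq enum_rank_inj) eq_sym.
Qed.

Lemma pd_coord (x : P) (c d : C) :
  derivable (fun y : P => Defs.coord y c) x (ebasis R d) /\
  pd d (fun y : P => Defs.coord y c) x = (d == c)%:R.
Proof.
apply: derive_near_quotient; near=> h => /=.
rewrite [h *: _ + x]addrC coord_add_ebasis addrAC subrr add0r.
rewrite /GRing.scale /= mulrA mulVf ?mul1r //.
by near: h; exact: nbhs_dnbhs_neq.
Unshelve. all: by end_near. Qed.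

Lemma pd_cst (x : P) d (r : R) : pd d (fun _ : P => r) x = 0.
Proof. exact: derive_cst. Qed.

Lemma pd_etaL_q (L : P -> R) x b j c :
  derivable (pd (vc j b) L) x (ebasis R c) ->
  pd c (fun y => etaL L b y (qc j)) x = - pd c (pd (vc j b) L) x.
Proof. exact: deriveN. Qed.

Lemma pd_etaL_v (L : P -> R) x b j b' c : pd c (fun y => etaL L b y (vc j b')) x = 0.
Proof. exact: pd_cst. Qed.

Lemma pd_etaL_s (L : P -> R) x b b' c : pd c (fun y => etaL L b y (sc b')) x = 0.
Proof. exact: pd_cst. Qed.

Lemma pd_energy (L : P -> R) x c :
  (forall j b, derivable (pd (vc j b) L) x (ebasis R c)) ->
  derivable L x (ebasis R c) ->
  pd c (energy L) x =
  \sum_(j < n) \sum_(b < k) ((c == vc j b)%:R * pd (vc j b) L x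
      + Defs.coord x (vc j b) * pd c (pd (vc j b) L) x) - pd c L x.
Proof.
move=> dLv dL; rewrite /pd /energy derive_sum_mulB //.
  congr (_ - _); apply: eq_bigr => j _; apply: eq_bigr => b _.
  by have [_ <-] := pd_coord x (vc j b) c.
by move=> j b; exact: (pd_coord x (vc j b) c).1.
Qed.

Lemma vf_app_dq i (f : P -> R) x : vf_app (dq i) f x = pd (qc i) f x.
Proof.
rewrite /vf_app (bigD1 (qc i)) //= big1 ?addr0; first by rewrite /dq eqxx mul1r.
by move=> c /negPf nc; rewrite /dq nc mul0r.
Qed.

Lemma lie_form_dq i (w : form1 R n k) x d :
  lie_form (dq i) w x d = pd (qc i) (fun y => w y d) x.
Proof.
rewrite /lie_form (bigD1 (qc i)) //= big1 ?addr0.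
  by rewrite /dq eqxx mul1r pd_cst mulr0 addr0.
by move=> c /negPf nc; rewrite /dq nc mul0r add0r pd_cst mulr0.
Qed.

Lemma vf_app_energy (X : vfield R n k) (L : P -> R) x :
  (forall c, derivable L x (ebasis R c)) ->
  (forall c j b, derivable (pd (vc j b) L) x (ebasis R c)) ->
  vf_app X (energy L) x =
  \sum_(j < n) \sum_(b < k) (X x (vc j b) * pd (vc j b) L x
     + Defs.coord x (vc j b) * vf_app X (pd (vc j b) L) x) - vf_app X L x.
Proof.
move=> dL dLv; rewrite /vf_app.
under eq_bigr => c _ do rewrite pd_energy // mulrBr big_distrr /=.
rewrite sumrB exchange_big /=; congr (_ - _); apply: eq_bigr => j _.
under eq_bigr => c _ do rewrite big_distrr /=.
rewrite exchange_big /=; apply: eq_bigr => b _.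
under eq_bigr => c _ do rewrite mulrDr.
rewrite big_split /= (bigD1 (vc j b)) //= eqxx mul1r big1 ?addr0; last first.
  by move=> c /negPf nc; rewrite nc mul0r mulr0.
congr (_ + _); rewrite big_distrr; apply: eq_bigr => c _; exact: mulrCA.
Qed.

Lemma vhess_kernel {L : P -> R} {x : P}
    {w : 'I_n -> 'I_k -> R} : vhess L x \in unitmx ->
  (forall j b, \sum_(l < n) \sum_(c < k) pd (vc j b) (pd (vc l c) L) x * w l c = 0) ->
  forall l c, w l c = 0.
Proof.
move=> hess_unit w_ker l c.
pose W : 'cV[R]_#|{: 'I_n * 'I_k}| := \col_q w (enum_val q).1 (enum_val q).2.
have W_ker : vhess L x *m W = 0.
  apply/matrixP => p z; rewrite !mxE -[RHS](w_ker (enum_val p).1 (enum_val p).2).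
  rewrite pair_bigA /= (reindex (fun q : 'I_#|{: 'I_n * 'I_k}| => enum_val q)) /=; last first.
    by exists enum_rank => q _; [exact: enum_valK | exact: enum_rankK].
  by apply: eq_bigr => q _; rewrite !mxE.
have -> : w l c = W (enum_rank (l, c)) ord0 by rewrite mxE enum_rankK.
by rewrite -(mulKmx hess_unit W) W_ker mulmx0 mxE.
Qed.

End Coordinates.

Section KContactLagrangian.
Context {R : realType} {n k : nat}.
Local Notation P := (pt R n k).
Context {U : set P} {L : P -> R}.
Hypotheses (oU : open U) (sL : smooth_on U L).

Lemma derivable_Dn l x v : U x -> derivable (Dn l L) x v.
Proof. by move=> Ux; apply: diff_derivable; apply: sL. Qed.

Section Reeb.
Context {Rb : 'I_k -> vfield R n k}.
Hypotheses (rL : regular_on U L) (reebRb : is_reeb U L Rb).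
Variable a : 'I_k.
Context {x : P}.
Hypothesis Ux : U x.

Lemma reeb_qc j : Rb a x (qc j) = 0.
Proof.
(* [i(R_a) d(eta^a)] evaluated on [d/dv^j_b] is the velocity Hessian applied
   to the q-components of [R_a]. *)
pose w l c := if c == a then Rb a x (qc l) else 0.
have -> : Rb a x (qc j) = w j a by rewrite /w eqxx.
apply: (vhess_kernel (rL x Ux)) => j' b; have [_ contr_d0] := reebRb a x Ux.
rewrite -[RHS](contr_d0 a (vc j' b)) /contr_d sum_coordT.
rewrite [X in _ = _ + X + _]big1 => [|l _]; last first.
  by rewrite big1 // => c _; rewrite !pd_etaL_v subrr mulr0.
rewrite [X in _ = _ + X]big1 => [|c _]; last by rewrite pd_etaL_s pd_etaL_v subrr mulr0.
rewrite !addr0; apply: eq_bigr => l _.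
rewrite (bigD1 a) //= /w eqxx big1 => [|c /negPf ->]; last by rewrite mulr0.
rewrite addr0 pd_cst sub0r /pd deriveN ?opprK 1?mulrC //.
exact: (derivable_Dn [:: vc l a] _ _ Ux).
Qed.

Lemma reeb_sc b : Rb a x (sc b) = (a == b)%:R.
Proof.
have [contr1 _] := reebRb a x Ux; rewrite -(contr1 b) /contr sum_coordT.
rewrite big1 => [|j _]; last by rewrite reeb_qc mul0r.
rewrite add0r big1 => [|j _]; last by rewrite big1 // => b' _; rewrite mulr0.
rewrite add0r (bigD1 b) //= eqxx mulr1 big1 ?addr0 // => b' /negPf nb.
by rewrite nb mulr0.
Qed.

Lemma reeb_pd_vc l b : vf_app (Rb a) (pd (vc l b) L) x = 0.
Proof.
have [_ contr_d0] := reebRb a x Ux.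
apply/eqP; rewrite -oppr_eq0 -(contr_d0 b (qc l)) /vf_app /contr_d -sumrN.
apply/eqP/eq_bigr => c _.
rewrite pd_etaL_q; last exact: (derivable_Dn [:: vc l b] _ _ Ux).
by rewrite mulrBr; case: c => [[j|[j b']]|b'] /=;
  rewrite ?reeb_qc ?mul0r ?subrr ?oppr0 // pd_cst mulr0 subr0 mulrN.
Qed.

Lemma reeb_energy : vf_app (Rb a) (energy L) x = - pd (sc a) L x.
Proof.
rewrite vf_app_energy => [||c j b]; last exact: (derivable_Dn [:: vc j b] _ _ Ux).
  2: by move=> c; exact: (derivable_Dn [::] _ _ Ux).
under eq_bigr => j _ do under eq_bigr => b _ do rewrite reeb_pd_vc mulr0 addr0.
have -> : vf_app (Rb a) L x =
    \sum_(j < n) \sum_(b < k) Rb a x (vc j b) * pd (vc j b) L x + pd (sc a) L x.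
  rewrite /vf_app sum_coordT big1 => [|j _]; last by rewrite reeb_qc mul0r.
  rewrite add0r; congr (_ + _).
  rewrite (bigD1 a) //= reeb_sc eqxx mul1r big1 ?addr0 // => b nb.
  by rewrite reeb_sc eq_sym (negPf nb) mul0r.
by rewrite opprD addrA subrr add0r.
Qed.

End Reeb.

Section CyclicCoordinate.
Context {i : 'I_n}.
Hypothesis Lq0 : forall x, U x -> pd (qc i) L x = 0.
Local Notation e := (ebasis R (qc i)).

Lemma invariant_near_qc x : U x -> exists2 eps, 0 < eps &
  invariant_near L e x eps /\ forall d, invariant_near (pd d L) e x eps.
Proof.
move=> Ux; have [r r_gt0 rU] := open_norm_ball oU Ux.
have [eps eps_gt0 Linv] : exists2 eps, 0 < eps & invariant_near L e x eps.
  apply: (invariant_near_of_derive0 r_gt0) => z xz.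
  by split; [exact: (sL [::] z (rU _ xz)) | exact: Lq0 (rU _ xz)].
exists (eps / 2); first by rewrite divr_gt0.
split; last by move=> d; apply: invariant_near_derive.
by apply: invariant_near_le Linv; rewrite ler_pdivrMr // ler_pMr // ler1n.
Qed.

Lemma pd_qc_etaL x a d : U x -> pd (qc i) (fun y => etaL L a y d) x = 0.
Proof.
move=> Ux; have [eps eps_gt0 [_ dLinv]] := invariant_near_qc x Ux.
apply: (derive_invariant_near eps_gt0) => y t xy t_small.
by case: d => [[j|[j b]]|b] //=; rewrite dLinv.
Qed.

Lemma pd_qc_energy x : U x -> pd (qc i) (energy L) x = 0.
Proof.
move=> Ux; have [eps eps_gt0 [Linv dLinv]] := invariant_near_qc x Ux.
apply: (derive_invariant_near eps_gt0) => y t xy t_small.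
rewrite /energy Linv //; congr (_ - _); apply: eq_bigr => j _; apply: eq_bigr => b _.
by rewrite dLinv // coord_add_ebasis mulr0 addr0.
Qed.

Lemma contr_d_etaL_qc (X : vfield R n k) a x : U x ->
  contr_d X (etaL L a) x (qc i) = - vf_app X (pd (vc i a) L) x.
Proof.
move=> Ux; rewrite /contr_d /vf_app -sumrN; apply: eq_bigr => c _.
rewrite pd_etaL_q ?pd_qc_etaL ?subr0 ?mulrN //.
exact: (derivable_Dn [:: vc i a]).
Qed.

Lemma klag_qc {Rb X : 'I_k -> vfield R n k} {x : P} : klag_eqs U L Rb X -> U x ->
  \sum_(a < k) vf_app (X a) (pd (vc i a) L) x =
    - \sum_(a < k) vf_app (Rb a) (energy L) x * pd (vc i a) L x.
Proof.
move=> klagX Ux; have [eq_d _] := klagX x Ux.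
have := eq_d (qc i); rewrite pd_qc_energy // sub0r.
under eq_bigr => a _ do rewrite contr_d_etaL_qc //.
rewrite sumrN => /oppr_inj ->; rewrite -sumrN; apply: eq_bigr => a _.
by rewrite /= mulrN.
Qed.

End CyclicCoordinate.
End KContactLagrangian.

Theorem mainTheorem18 (R : realType) (n k : nat) (U : set (pt R n k))
  (L : pt R n k -> R) (i : 'I_n) :
  open U -> smooth_on U L -> regular_on U L ->
  (forall x, U x -> pd (qc i) L x = 0) ->
  (forall (a : 'I_k) (x : pt R n k), U x ->
      forall d : coordT n k, lie_form (dq i) (etaL L a) x d = 0) /\
  (forall x, U x -> vf_app (dq i) (energy L) x = 0) /\
  (forall (Rb X : 'I_k -> vfield R n k),
     is_reeb U L Rb ->
     (forall (a : 'I_k) (c : coordT n k), smooth_on U (fun x => X a x c)) ->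
     klag_eqs U L Rb X ->
     forall x, U x ->
       \sum_(a < k) vf_app (X a) (pd (vc i a) L) x =
         - \sum_(a < k) vf_app (Rb a) (energy L) x * pd (vc i a) L x /\
       \sum_(a < k) vf_app (X a) (pd (vc i a) L) x =
         \sum_(a < k) pd (sc a) L x * pd (vc i a) L x).
Proof.
move=> oU sL rL Lq0; split; [|split].
- by move=> a x Ux d; rewrite lie_form_dq (pd_qc_etaL oU sL Lq0).
- by move=> x Ux; rewrite vf_app_dq (pd_qc_energy oU sL Lq0).
move=> Rb X reebRb _ klagX x Ux; have conservation := klag_qc oU sL Lq0 klagX Ux.
split=> //; rewrite conservation -sumrN; apply: eq_bigr => a _.
by rewrite (reeb_energy sL rL reebRb a Ux) mulNr opprK.
Qed.
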